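(* Fix $m\ge1$ and $n\ge0$. For every formula $\phi\in\mathcal{L}^m$ and every label $x$: if $\phi$ is valid (true at every world of every $\mathsf{Ldm}_{n}^{m}$-model), then the sequent $x:\phi$ is derivable in the calculus $\mathsf{Ldm}_{n}^{m}\mathsf{L}$ (which contains no cut rule).
   Context: Language. $Ag=\{1,\dots,m\}$, $Var$ a countable set of propositional variables; formulas of $\mathcal{L}^m$: $\phi ::= p \mid \overline{p} \mid (\phi\wedge\phi) \mid (\phi\vee\phi) \mid \Box\phi \mid \Diamond\phi \mid [i]\phi \mid \langle i\rangle\phi$. Models. An $\mathsf{Ldm}_{n}^{m}$-frame is $(W,\{\mathcal{R}_i\}_{i\in Ag})$ with $W\neq\emptyset$ and: (C1) each $\mathcal{R}_i\subseteq W\times W$ is an equivalence relation; (C2) for all $u_1,\dots,u_m\in W$, $\bigcap_{i\in Ag}\mathcal{R}_i(u_i)\neq\emptyset$, where $\mathcal{R}_i(w)=\{v:(w,v)\in\mathcal{R}_i\}$; (C3) only if $n>0$: for each $i\in Ag$ and all $w_0,\dots,w_n\in W$ there are $0\le k<j\le n$ with $(w_k,w_j)\in\mathcal{R}_i$. A model adds a valuation $V:Var\to\mathcal{P}(W)$. Satisfaction: $w\Vdash p$ iff $w\in V(p)$; $w\Vdash\overline{p}$ iff $w\notin V(p)$; $\wedge,\vee$ as usual; $w\Vdash\Box\phi$ iff $u\Vdash\phi$ for all $u\in W$; $w\Vdash\Diamond\phi$ iff $u\Vdash\phi$ for some $u\in W$; $w\Vdash[i]\phi$ iff $u\Vdash\phi$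 for all $u\in\mathcal{R}_i(w)$; $w\Vdash\langle i\rangle\phi$ iff $u\Vdash\phi$ for some $u\in\mathcal{R}_i(w)$. Labelled sequents $\mathcal{R},\Gamma$: $\mathcal{R}$ a multiset of relational atoms $\mathcal{R}_ixy$, $\Gamma$ a multiset of labelled formulas $x:\phi$. Derivations are finite trees whose leaves are $(\mathsf{id})$ instances. Rules of $\mathsf{Ldm}_{n}^{m}\mathsf{L}$ (premise(s) / conclusion): $(\mathsf{id})$: / $\mathcal{R}, w:p, w:\overline{p},\Gamma$. $(\wedge)$: $\mathcal{R}, w:\phi\wedge\psi, w:\phi,\Gamma$ and $\mathcal{R}, w:\phi\wedge\psi, w:\psi,\Gamma$ / $\mathcal{R}, w:\phi\wedge\psi,\Gamma$. $(\vee)$: $\mathcal{R}, w:\phi\vee\psi, w:\phi, w:\psi,\Gamma$ / $\mathcal{R}, w:\phi\vee\psi,\Gamma$. $(\Box)$: $\mathcal{R}, w:\Box\phi, v:\phi,\Gamma$ / $\mathcal{R}, w:\Box\phi,\Gamma$ ($v$ fresh). $(\Diamond)$: $\mathcal{R}, w:\Diamond\phi, u:\phi,\Gamma$ / $\mathcal{R}, w:\Diamond\phi,\Gamma$. $(\mathsf{IOA})$: $\mathcal{R},\mathcal{R}_1u_1v,\dots,\mathcal{R}_mu_mv,\Gamma$ / $\mathcal{R},\Gamma$ ($v$ fresh). $([i])$: $\mathcal{R},\mathcal{R}_iwv, w:[i]\phi, v:\phi,\Gamma$ / $\mathcal{R}, w:[i]\phi,\Gamma$ ($v$ fresh). $(\mathsf{Pr}_i)$: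 $\mathcal{R}, w:\langle i\rangle\phi, u:\phi,\Gamma$ / $\mathcal{R}, w:\langle i\rangle\phi,\Gamma$, applicable only if $w=u$ or there are labels $w=z_0,\dots,z_k=u$ ($k\ge1$) with $\mathcal{R}_iz_lz_{l+1}\in\mathcal{R}$ or $\mathcal{R}_iz_{l+1}z_l\in\mathcal{R}$ for each $l<k$. $(\mathsf{APC}^i_n)$ (only if $n>0$): premises $\mathcal{R},\mathcal{R}_iw_kw_j,\Gamma$ for all $0\le k\le n-1$, $k+1\le j\le n$ / $\mathcal{R},\Gamma$. ''Fresh'' means not occurring in the conclusion. One copy of $([i])$, $(\mathsf{Pr}_i)$, $(\mathsf{APC}^i_n)$ for each $i\in Ag$. *)

From Stdlib Require Import List Permutation Relations.
From mathcomp Require Import all_boot.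

Set Implicit Arguments.
Unset Strict Implicit.
Unset Printing Implicit Defensive.

(* Agents are 'I_m (agent i of the paper is the ordinal i-1).
   Propositional variables and labels are natural numbers. *)
Definition var := nat.
Definition label := nat.

Inductive form (m : nat) : Type :=
  | Atom : var -> form m
  | NAtom : var -> form m
  | And : form m -> form m -> form m
  | Or : form m -> form m -> form m
  | Box : form m -> form m
  | Dia : form m -> form m
  | Stit : 'I_m -> form m -> form m
  | DStit : 'I_m -> form m -> form m.

Arguments Atom {m}.
Arguments NAtom {m}.

Record frame (m : nat) := Frame {
  world : Type;
  acc : 'I_m -> world -> world -> Prop
}.
Arguments world {m} _.
Arguments acc {m} _ _ _ _.

Definition is_ldm_frame (m n : nat) (F : frame m) : Prop :=
  (forall i, equivalence (world F) (acc F i)) /\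
  (forall u : 'I_m -> world F, exists w : world F, forall i, acc F i (u i) w) /\
  (0 < n -> forall (i : 'I_m) (ws : nat -> world F),
      exists k j, k < j /\ j <= n /\ acc F i (ws k) (ws j)).

Fixpoint sat (m : nat) (F : frame m) (V : var -> world F -> Prop)
    (w : world F) (phi : form m) : Prop :=
  match phi with
  | Atom p => V p w
  | NAtom p => ~ V p w
  | And a b => sat V w a /\ sat V w b
  | Or a b => sat V w a \/ sat V w b
  | Box a => forall u, sat V u a
  | Dia a => exists u, sat V u a
  | Stit i a => forall u, acc F i w u -> sat V u a
  | DStit i a => exists u, acc F i w u /\ sat V u a
  end.

Definition valid (m n : nat) (phi : form m) : Prop :=
  forall (F : frame m) (V : var -> world F -> Prop),
    is_ldm_frame n F -> forall w : world F, sat V w phi.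

Record ratom (m : nat) := RA { ra_ag : 'I_m; ra_src : label; ra_tgt : label }.
Record lform (m : nat) := LF { lf_lab : label; lf_form : form m }.

Definition labels_R (m : nat) (R : list (ratom m)) : list label :=
  flat_map (fun a => ra_src a :: ra_tgt a :: nil) R.
Definition labels_G (m : nat) (G : list (lform m)) : list label :=
  map (@lf_lab m) G.
Definition fresh (m : nat) (v : label) (R : list (ratom m)) (G : list (lform m)) :=
  ~ In v (labels_R R) /\ ~ In v (labels_G G).

Definition edge_i (m : nat) (R : list (ratom m)) (i : 'I_m) (x y : label) : Prop :=
  In (RA i x y) R \/ In (RA i y x) R.
Definition pr_cond (m : nat) (R : list (ratom m)) (i : 'I_m) (w u : label) : Prop :=
  clos_refl_trans label (edge_i R i) w u.

(* Derivability in Ldm_n^m L.  Sequents are pairs of multisets, represented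
   by lists up to permutation (rule [d_perm]). *)
Inductive derivable (m n : nat) : list (ratom m) -> list (lform m) -> Prop :=
  | d_perm : forall R R' G G',
      derivable n R G -> Permutation R R' -> Permutation G G' ->
      derivable n R' G'
  | d_id : forall R G w p,
      derivable n R (LF w (Atom p) :: LF w (NAtom p) :: G)
  | d_and : forall R G w a b,
      derivable n R (LF w (And a b) :: LF w a :: G) ->
      derivable n R (LF w (And a b) :: LF w b :: G) ->
      derivable n R (LF w (And a b) :: G)
  | d_or : forall R G w a b,
      derivable n R (LF w (Or a b) :: LF w a :: LF w b :: G) ->
      derivable n R (LF w (Or a b) :: G)
  | d_box : forall R G w v a,
      fresh v R (LF w (Box a) :: G) ->
      derivable n R (LF w (Box a) :: LF v a :: G) ->
      derivable n R (LF w (Box a) :: G)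
  | d_dia : forall R G w u a,
      derivable n R (LF w (Dia a) :: LF u a :: G) ->
      derivable n R (LF w (Dia a) :: G)
  | d_ioa : forall R G (us : 'I_m -> label) v,
      fresh v R G ->
      derivable n (map (fun i => RA i (us i) v) (enum 'I_m) ++ R) G ->
      derivable n R G
  | d_stit : forall R G i w v a,
      fresh v R (LF w (Stit i a) :: G) ->
      derivable n (RA i w v :: R) (LF w (Stit i a) :: LF v a :: G) ->
      derivable n R (LF w (Stit i a) :: G)
  | d_pr : forall R G i w u a,
      pr_cond R i w u ->
      derivable n R (LF w (DStit i a) :: LF u a :: G) ->
      derivable n R (LF w (DStit i a) :: G)
  | d_apc : forall R G (i : 'I_m) (ws : nat -> label),
      0 < n ->
      (forall k j, k <= n - 1 -> k + 1 <= j -> j <= n ->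
         derivable n (RA i (ws k) (ws j) :: R) G) ->
      derivable n R G.

(** If [x : phi] is not derivable, a fair proof search that never stops
    produces an increasing chain of underivable sequents: every rule is
    applied backwards to every formula, with every possible witness label,
    in a branch that stays underivable.  Its limit is a countermodel whose
    worlds are the labels, whose [R_i] is the equivalence closure of the
    [R_i]-atoms produced, and in which every formula of the chain is false
    at its label.  The (IOA) and (APC_n^i) steps of the search make this a
    genuine Ldm_n^m-frame, so [phi] is not valid. *)
From Stdlib Require Import List Permutation Relations ClassicalEpsilon Cantor.
From mathcomp Require Import all_boot zify.

Set Implicit Arguments.
Unset Strict Implicit.
Unset Printing Implicit Defensive.

Lemma In_mem (T : eqType) (x : T) (s : seq T) : x \in s -> In x s.
Proof.
elim: s => //= y s IHs; rewrite in_cons => /orP [/eqP ->|xs]; [left | right]; auto.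
Qed.

Lemma In_le_list_max x l : In x l -> x <= list_max l.
Proof.
move=> xl; apply/leP; have := proj1 (list_max_le l _) (le_n (list_max l)).
by rewrite Forall_forall => /(_ x xl).
Qed.

Lemma Permutation_pull (A : Type) (a : A) (l : list A) : In a l ->
  exists l0, Permutation l (a :: l0) /\ forall s, Permutation (l ++ s) (a :: s ++ l0).
Proof.
move=> al; have [l1 [l2 ->]] := in_split _ _ al; exists (l1 ++ l2).
have l_front : Permutation (l1 ++ a :: l2) (a :: l1 ++ l2).
  exact/Permutation_sym/Permutation_middle.
split=> // s; apply: Permutation_trans (Permutation_app_tail s l_front) _.
exact/perm_skip/Permutation_app_comm.
Qed.

Lemma nth_error_prefix (A : Type) (l s : list A) j a :
  nth_error l j = Some a -> nth_error (l ++ s) j = Some a.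
Proof. by elim: l j => [|b l IHl] [|j] //=; apply: IHl. Qed.

Section Completeness.
Variables m n : nat.

Lemma pr_cond_incl (R R' : list (ratom m)) i x y :
  incl R R' -> pr_cond R i x y -> pr_cond R' i x y.
Proof.
move=> RR'; elim=> [a b [ab|ba]|a|a b c _ ab _ bc]; last exact: rt_trans ab bc.
- by apply: rt_step; left; apply: RR'.
- by apply: rt_step; right; apply: RR'.
- exact: rt_refl.
Qed.

Lemma pr_cond_sym (R : list (ratom m)) i x y : pr_cond R i x y -> pr_cond R i y x.
Proof.
elim=> [a b [ab|ba]|a|a b c _ ba _ cb]; last exact: rt_trans cb ba.
- by apply: rt_step; right.
- by apply: rt_step; left.
- exact: rt_refl.
Qed.

Lemma derivable_permG R (G G' : list (lform m)) :
  Permutation G G' -> derivable n R G -> derivable n R G'.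
Proof. by move=> GG' dG; apply: d_perm dG (Permutation_refl R) GG'. Qed.

Lemma derivable_complementary R (G : list (lform m)) w p :
  In (LF w (Atom p)) G -> In (LF w (NAtom p)) G -> derivable n R G.
Proof.
move=> wp wnp; have [G0 [GG0 _]] := Permutation_pull wp.
have [//|wnp0] := Permutation_in _ GG0 wnp.
have [G1 [G0G1 _]] := Permutation_pull wnp0; apply: derivable_permG (d_id n R G1 w p).
exact/Permutation_sym/(Permutation_trans GG0)/perm_skip.
Qed.

Definition fresh_label (R : list (ratom m)) (G : list (lform m)) : label :=
  (list_max (labels_R R ++ labels_G G)).+1.

Lemma fresh_labelP R G : fresh (fresh_label R G) R G.
Proof.
have below v : In v (labels_R R ++ labels_G G) -> v < fresh_label R G.
  exact: In_le_list_max.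
by split=> v_in; [have := below _ (in_or_app _ _ _ (or_introl v_in))
  | have := below _ (in_or_app _ _ _ (or_intror v_in))]; rewrite ltnn.
Qed.

Lemma fresh_perm v R (G G' : list (lform m)) :
  Permutation G G' -> fresh v R G -> fresh v R G'.
Proof.
move=> GG' [vR vG]; split=> // /in_map_iff [f [fv fG']]; apply: vG.
by rewrite -fv; apply/in_map/(Permutation_in _ (Permutation_sym GG')).
Qed.

Definition sequent := (list (ratom m) * list (lform m))%type.

Definition underivable (S : sequent) := ~ derivable n S.1 S.2.

(* Formulas are only ever appended, so that a task can refer to a formula by
   its position. *)
Definition extends (S T : sequent) := incl S.1 T.1 /\ exists X, T.2 = S.2 ++ X.

Lemma extends_refl S : extends S S.
Proof. by split; [apply: incl_refl | exists nil; rewrite cats0]. Qed.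

Lemma extends_trans S T U : extends S T -> extends T U -> extends S U.
Proof.
move=> [ST [X TX]] [TU [Y UY]]; split; first exact: incl_tran ST TU.
by exists (X ++ Y); rewrite UY TX catA.
Qed.

Lemma extends_In S T f : extends S T -> In f S.2 -> In f T.2.
Proof. by move=> [_ [X ->]] fS; apply: in_or_app; left. Qed.

Lemma extends_nth_error S T j f :
  extends S T -> nth_error S.2 j = Some f -> nth_error T.2 j = Some f.
Proof. by move=> [_ [X ->]]; apply: nth_error_prefix. Qed.

Lemma extends_add_formulas R G X : extends (R, G) (R, G ++ X).
Proof. by split; [apply: incl_refl | exists X]. Qed.

(* [a] is the witness label tried for [Dia] and [DStit]. *)
Definition expand (a : label) (f : lform m) (S : sequent) : sequent :=
  let R := S.1 in let G := S.2 in let v := fresh_label R G in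
  let: LF w phi := f in
  match phi with
  | And b c => if excluded_middle_informative (derivable n R (G ++ [:: LF w b]))
               then (R, G ++ [:: LF w c]) else (R, G ++ [:: LF w b])
  | Or b c => (R, G ++ [:: LF w b; LF w c])
  | Box b => (R, G ++ [:: LF v b])
  | Dia b => (R, G ++ [:: LF a b])
  | Stit i b => (RA i w v :: R, G ++ [:: LF v b])
  | DStit i b => if excluded_middle_informative (pr_cond R i w a)
                 then (R, G ++ [:: LF a b]) else S
  | _ => S
  end.

Lemma expand_extends a f S : extends S (expand a f S).
Proof.
case: S f => R G [w [p|p|b c|b c|b|b|i b|i b]] /=; try exact: extends_refl;
  try exact: extends_add_formulas.
- by case: excluded_middle_informative => ?; apply: extends_add_formulas.
- by split; [apply: incl_tl; apply: incl_refl | eexists].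
- case: excluded_middle_informative => ?; first exact: extends_add_formulas.
  exact: extends_refl.
Qed.

Lemma expand_underivable a f S :
  In f S.2 -> underivable S -> underivable (expand a f S).
Proof.
case: S => R G /= fG notG; have [G0 [GG0 GX]] := Permutation_pull fG.
have fresh0 := fresh_perm GG0 (fresh_labelP R G).
suff to_G0 : derivable n (expand a f (R, G)).1 (expand a f (R, G)).2 ->
    derivable n R (f :: G0).
  by move=> /to_G0 /(derivable_permG (Permutation_sym GG0)).
case: f fG GG0 GX fresh0 => w [p|p|b c|b c|b|b|i b|i b] /= _ GG0 GX fresh0 dS;
  try exact: derivable_permG GG0 dS.
- move: dS; case: excluded_middle_informative => [db /= dc|nb /= db]; last by case: nb.
  apply: d_and; first exact: derivable_permG (GX _) db.
  exact: derivable_permG (GX _) dc.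
- by apply: d_or; exact: derivable_permG (GX _) dS.
- by apply: d_box fresh0 _; exact: derivable_permG (GX _) dS.
- by apply: d_dia; exact: derivable_permG (GX _) dS.
- by apply: d_stit fresh0 _; exact: derivable_permG (GX _) dS.
- move: dS; case: excluded_middle_informative => [wa /= dS|_ /= dG].
    by apply: d_pr wa _; exact: derivable_permG (GX _) dS.
  exact: derivable_permG GG0 dG.
Qed.

Definition add_ioa (us : {ffun 'I_m -> label}) (S : sequent) : sequent :=
  ([seq RA i (us i) (fresh_label S.1 S.2) | i <- enum 'I_m] ++ S.1, S.2).

Lemma add_ioa_extends us S : extends S (add_ioa us S).
Proof. by split; [apply: incl_appr; apply: incl_refl | exists nil; rewrite cats0]. Qed.

Lemma add_ioa_underivable us S : underivable S -> underivable (add_ioa us S).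
Proof. by move=> notS /(d_ioa (fresh_labelP S.1 S.2)). Qed.

Definition apc_candidate (i : 'I_m) (ws : seq label) (S : sequent) (p : nat * nat) :=
  p.1 < p.2 <= n /\ underivable (RA i (nth 0 ws p.1) (nth 0 ws p.2) :: S.1, S.2).

Definition apc_choice i ws S : nat * nat :=
  epsilon (inhabits (0, 0)) (apc_candidate i ws S).

Definition add_apc (i : 'I_m) (ws : seq label) (S : sequent) : sequent :=
  if 0 < n then
    let p := apc_choice i ws S in (RA i (nth 0 ws p.1) (nth 0 ws p.2) :: S.1, S.2)
  else S.

Lemma apc_choiceP i ws S :
  0 < n -> underivable S -> apc_candidate i ws S (apc_choice i ws S).
Proof.
move=> n_gt0 notS; apply: epsilon_spec; apply: NNPP => none; apply: notS.
apply: (d_apc (i := i) (ws := nth 0 ws)) => // k j k_le j_ge j_le.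
by apply: NNPP => notkj; apply: none; exists (k, j); split=> //=; lia.
Qed.

Lemma add_apc_extends i ws S : extends S (add_apc i ws S).
Proof.
rewrite /add_apc; case: (0 < n); last exact: extends_refl.
by split; [apply: incl_tl; apply: incl_refl | exists nil; rewrite cats0].
Qed.

Lemma add_apc_underivable i ws S : underivable S -> underivable (add_apc i ws S).
Proof.
rewrite /add_apc; case n_gt0: (0 < n) => // notS.
by case: (apc_choiceP i ws n_gt0 notS).
Qed.

(* A task names one backward step: expand the [j]-th formula with witness
   [a], add an (IOA) witness, or resolve an instance of (APC_n^i). *)
Definition task := ((nat * label) + {ffun 'I_m -> label} + ('I_m * seq label))%type.

Definition run (t : task) (S : sequent) : sequent :=
  match t with
  | inl (inl (j, a)) => if nth_error S.2 j is Some f then expand a f S else S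
  | inl (inr us) => add_ioa us S
  | inr (i, ws) => add_apc i ws S
  end.

Lemma run_extends t S : extends S (run t S).
Proof.
case: t => [[[j a]|us]|[i ws]] /=; last exact: add_apc_extends;
  last exact: add_ioa_extends.
by case: nth_error => [f|]; [apply: expand_extends | apply: extends_refl].
Qed.

Lemma run_underivable t S : underivable S -> underivable (run t S).
Proof.
case: t => [[[j a]|us]|[i ws]] /=; last exact: add_apc_underivable;
  last exact: add_ioa_underivable.
case jf: nth_error => [f|] // notS.
by apply: expand_underivable notS; apply: nth_error_In jf.
Qed.

(* Every task occurs at arbitrarily late times: time [k] runs the task
   coded by the first component of the Cantor decoding of [k]. *)
Definition schedule (k : nat) : task :=
  odflt (inl (inl (0, 0))) (unpickle (Cantor.of_nat k).1).

Lemma schedule_fair t K : exists2 k, K <= k & schedule k = t.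
Proof.
exists (Cantor.to_nat (pickle t, K)); last by rewrite /schedule cancel_of_to pickleK.
by have := to_nat_non_decreasing (pickle t) K; lia.
Qed.

Section Limit.
Variable S0 : sequent.
Hypothesis S0_underivable : underivable S0.

Fixpoint stage (k : nat) : sequent :=
  if k is k'.+1 then run (schedule k') (stage k') else S0.

Lemma stage_underivable k : underivable (stage k).
Proof. by elim: k => //= k; apply: run_underivable. Qed.

Lemma stage_extends k k' : k <= k' -> extends (stage k) (stage k').
Proof.
move=> /subnK <-; elim: (k' - k) => [|d IHd]; first exact: extends_refl.
exact: extends_trans IHd (run_extends _ _).
Qed.

Lemma run_scheduled t K : exists2 k, K <= k & stage k.+1 = run t (stage k).
Proof. by have [k Kk kt] := schedule_fair t K; exists k => //=; rewrite kt. Qed.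

Definition in_limit (f : lform m) := exists k, In f (stage k).2.

Lemma in_limit_common f g : in_limit f -> in_limit g ->
  exists k, In f (stage k).2 /\ In g (stage k).2.
Proof.
move=> [k1 f1] [k2 g2]; exists (maxn k1 k2).
by split; [apply: extends_In f1 | apply: extends_In g2]; apply: stage_extends;
  [apply: leq_maxl | apply: leq_maxr].
Qed.

Lemma expand_scheduled f a K : in_limit f ->
  exists2 k, K <= k & stage k.+1 = expand a f (stage k).
Proof.
move=> [k0 fk0]; have [j jf] := In_nth_error _ _ fk0.
have [k Kk Ek] := run_scheduled (inl (inl (j, a))) (maxn K k0).
exists k; first exact: leq_trans (leq_maxl K k0) Kk.
rewrite Ek /= (extends_nth_error _ jf) //.
by apply: stage_extends; apply: leq_trans (leq_maxr K k0) Kk.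
Qed.

Lemma in_limit_added k R X f :
  stage k.+1 = (R, (stage k).2 ++ X) -> In f X -> in_limit f.
Proof. by move=> Ek fX; exists k.+1; rewrite Ek; apply: in_or_app; right. Qed.
Arguments in_limit_added k {R X f}.

Definition limit_acc (i : 'I_m) (x y : label) := exists k, pr_cond (stage k).1 i x y.

Definition limit_frame : frame m := @Frame m label limit_acc.

Definition limit_val (p : var) (w : world limit_frame) := in_limit (LF w (NAtom p)).

Lemma limit_acc_stage k i x y : pr_cond (stage k).1 i x y -> limit_acc i x y.
Proof. by exists k. Qed.

Lemma limit_acc_equiv i : equivalence label (limit_acc i).
Proof.
split=> [x|x y z [k1 xy] [k2 yz]|x y [k xy]]; first by exists 0; apply: rt_refl.
  exists (maxn k1 k2); apply: rt_trans; apply: pr_cond_incl;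
  [| exact: xy | | exact: yz]; apply: (proj1 (stage_extends _));
  [apply: leq_maxl | apply: leq_maxr].
by exists k; apply: pr_cond_sym.
Qed.

Lemma limit_independence (u : 'I_m -> label) :
  exists w, forall i, limit_acc i (u i) w.
Proof.
have [k _ Ek] := run_scheduled (inl (inr [ffun i => u i])) 0.
exists (fresh_label (stage k).1 (stage k).2) => i.
apply: (@limit_acc_stage k.+1); apply: rt_step; left; rewrite Ek /=.
apply: in_or_app; left; rewrite -[u i](ffunE (fun i => u i)).
by apply: in_map; apply/In_mem/mem_enum.
Qed.

Lemma limit_apc : 0 < n -> forall (i : 'I_m) (ws : nat -> label),
  exists k j, k < j /\ j <= n /\ limit_acc i (ws k) (ws j).
Proof.
move=> n_gt0 i ws; pose s := mkseq ws n.+1.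
have [k _ Ek] := run_scheduled (inr (i, s)) 0.
have [/andP [lt_kj le_jn] _] := apc_choiceP i s n_gt0 (@stage_underivable k).
set p := apc_choice i s (stage k) in lt_kj le_jn.
exists p.1, p.2; do 2!split=> //; apply: (@limit_acc_stage k.+1); apply: rt_step; left.
rewrite Ek /= /add_apc n_gt0 -/p !nth_mkseq //; [by left | lia].
Qed.

Lemma limit_frame_ldm : is_ldm_frame n limit_frame.
Proof.
split; first exact: limit_acc_equiv.
by split; [exact: limit_independence | exact: limit_apc].
Qed.

Lemma limit_refutes phi w : in_limit (LF w phi) -> ~ sat limit_val w phi.
Proof.
elim: phi w => [p|p|b IHb c IHc|b IHb c IHc|b IHb|b IHb|i b IHb|i b IHb] w wphi /=.
- move=> /(in_limit_common wphi) [k [wp wnp]].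
  exact: stage_underivable (derivable_complementary _ wp wnp).
- by apply.
- have [k _] := expand_scheduled 0 0 wphi; rewrite /expand.
  case: excluded_middle_informative => [db|nb] /= Ek [wb wc].
    by apply: IHc wc; apply: (in_limit_added k Ek); left.
  by apply: IHb wb; apply: (in_limit_added k Ek); left.
- have [k _ Ek] := expand_scheduled 0 0 wphi.
  by case=> [wb|wc]; [apply: IHb wb | apply: IHc wc];
    apply: (in_limit_added k Ek); [left | right; left].
- have [k _ Ek] := expand_scheduled 0 0 wphi.
  by move=> all_b; apply: IHb (all_b _); apply: (in_limit_added k Ek); left.
- move=> [u ub]; have [k _ Ek] := expand_scheduled u 0 wphi.
  by apply: IHb ub; apply: (in_limit_added k Ek); left.
- have [k _ Ek] := expand_scheduled 0 0 wphi.
  move=> all_b; apply: IHb (all_b _ _).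
    by apply: (in_limit_added k Ek); left.
  by apply: (@limit_acc_stage k.+1); apply: rt_step; left; rewrite Ek; left.
- move=> [u [[K wu] ub]]; have [k Kk] := expand_scheduled u K wphi; rewrite /expand.
  case: excluded_middle_informative => [wu' /= Ek|[]].
    by apply: IHb ub; apply: (in_limit_added k Ek); left.
  by apply: pr_cond_incl wu; apply: (proj1 (stage_extends Kk)).
Qed.

End Limit.
End Completeness.

Theorem theorem3 (m n : nat) (hm : 1 <= m) (phi : form m) (x : label) :
  valid n phi -> derivable n nil (LF x phi :: nil).
Proof.
move=> phi_valid; apply: NNPP => not_derivable.
pose S0 : sequent m := (nil, [:: LF x phi]).
have S0_underivable : underivable n S0 by [].
have x_phi : in_limit n S0 (LF x phi) by exists 0; left.
exact/(limit_refutes S0_underivable x_phi)/phi_valid/limit_frame_ldm.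
Qed.
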